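(* Let $K=\mathbb{Q}(\sqrt{-\Delta})$ be an imaginary quadratic field, $r\ge 1$, and let $(L,H_L,\alpha)$ be a triple where $L$ is a $K$-vector space of dimension $r$, $H_L$ is a $K$-valued Hermitian form on $L$ for which there exists a $K$-basis of $L$ in which its matrix is $\mathrm{diag}(1,-1,\dots,-1)$ (signature $(1,r-1)$), and $\alpha:L\otimes_K\mathbb{C}\to\mathbb{C}$ is a surjective $\mathbb{C}$-linear map such that the restriction of $-H_{L,\mathbb{C}}$ to $\ker\alpha$ is positive definite. Let $1\le k\le r$, let $W_k$ be the cokernel of the inclusion $\lambda^k(\ker\alpha)\hookrightarrow\lambda^k(L)\otimes_K\mathbb{C}$ induced by $\ker\alpha\hookrightarrow L\otimes_K\mathbb{C}$, and let $\alpha_k:\lambda^k(L)\otimes_K\mathbb{C}\to W_k$ be the quotient map. Then $W_k$ has dimension $\binom{r-1}{k-1}$, the Hermitian form $H'=(-1)^{k-1}\lambda^k(H_L)$ on $\lambda^k(L)$ has a $K$-basis in which its matrix is $\begin{pmatrix}E_{a}&0\\0&-E_{b}\end{pmatrix}$ with $(a,b)=\left(\binom{r-1}{k-1},\binom{r-1}{k}\right)$, and the restriction of $-H'_{\mathbb{C}}$ to $\ker\alpha_k=\lambda^k(\ker\alpha)$ is positive definite. In other words, $(\lambda^k(L),(-1)^{k-1}\lambda^k(H_L),\alpha_k)$ is again a triple of the same type, of rank $\binom{r}{k}$ and signature $\left(\binom{r-1}{k-1},\binom{r-1}{k}\right)$ (and so defines, up to isogeny, an abelian variety with multiplication by $K$,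 the $k$-th exterior power of the one attached to $(L,H_L,\alpha)$).
   Context: $H_{L,\mathbb{C}}$ denotes the extension of $H_L$ to a Hermitian form on $L\otimes_K\mathbb{C}$ (similarly $H'_{\mathbb{C}}$). The exterior power of a Hermitian form is defined by $\lambda^k(H_L)(l_1\wedge\dots\wedge l_k,\,l'_1\wedge\dots\wedge l'_k)=\det\{H_L(l_i,l'_j)\}_{i,j}$. $E_m$ is the $m\times m$ identity matrix. *)

(* complex numbers are modeled as R[i] for R : realType. *)
From HB Require Import structures.
From mathcomp Require Import all_boot all_order all_algebra.
From mathcomp Require Import reals.
From mathcomp Require Import complex.
Set Implicit Arguments. Unset Strict Implicit. Unset Printing Implicit Defensive.
Import Order.TTheory GRing.Theory Num.Theory.
Local Open Scope ring_scope.

Definition inK (C : numClosedFieldType) (Delta : nat) (x : C) : Prop :=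
  exists p q : rat, x = ratr p + ratr q * sqrtC (- (Delta%:R)).

Definition mxK (C : numClosedFieldType) (Delta : nat) m n (M : 'M[C]_(m, n)) : Prop :=
  forall i j, inK Delta (M i j).

Definition adjmx (C : numClosedFieldType) m n (M : 'M[C]_(m, n)) : 'M[C]_(n, m) :=
  map_mx Num.conj (M^T).

(* k-element subsets of 'I_n: index set of the standard basis e_S of lambda^k *)
Definition ksub (n k : nat) := {S : {set 'I_n} | #|S| == k}.

(* increasing enumeration s_1 < ... < s_k of a k-subset S *)
Definition ksub_enum n k (S : ksub n k) : 'I_k -> 'I_n :=
  fun i => enum_val (cast_ord (esym (eqP (valP S))) i).

(* Rows of (compound M k) are the coordinates, in the basis e_T, of the
   wedges of k rows of M; for a Gram matrix G of H, compound G k is the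
   Gram matrix of lambda^k(H) in the basis e_S. *)
Definition compound (R : comNzRingType) m n (M : 'M[R]_(m, n)) (k : nat)
  : 'M[R]_(#|{: ksub m k}|, #|{: ksub n k}|) :=
  \matrix_(i, j) \det (mxsub (@ksub_enum m k (enum_val i))
                             (@ksub_enum n k (enum_val j)) M).

Definition sigmx (R : pzRingType) (n a : nat) : 'M[R]_n :=
  diag_mx (\row_(i < n) (if (i < a)%N then 1 else -1)).

(* a K-valued Hermitian form (Gram matrix G) admits a K-basis (rows of P)
   in which its matrix is diag(E_a, -E_(n-a)) *)
Definition has_sig (C : numClosedFieldType) (Delta : nat) n (G : 'M[C]_n) (a : nat) : Prop :=
  exists P : 'M[C]_n, [/\ mxK Delta P, P \in unitmx & P *m G *m adjmx P = sigmx C n a].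

Definition negdef_on (C : numClosedFieldType) n m (G : 'M[C]_n) (B : 'M[C]_(m, n)) : Prop :=
  forall w : 'rV[C]_n, (w <= B)%MS -> w != 0 -> 0 < - (w *m G *m adjmx w) 0 0.

(* By Cauchy-Binet the k-th compound matrix is functorial, so it carries the
   congruence P G P^* = diag(1, -1, ..., -1) to a congruence between the Gram
   matrix of lambda^k(H_L) and the diagonal matrix whose entry at the k-subset S
   is the product of the signs indexed by S, namely (-1)^(k-1) if 1 \in S and
   (-1)^k otherwise.  After the twist by (-1)^(k-1) the positive entries are
   those with 1 \in S, C(r-1, k-1) of them, and a permutation of the basis
   sorts them.  Likewise -H_L is diagonal with positive entries in a suitable
   basis of ker alpha (spectral theorem), and the compound of that basis spans
   lambda^k(ker alpha) with diagonal Gram matrix of positive products.  Finally,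
   compounds of row-free matrices are row-free, so lambda^k(ker alpha) has
   dimension C(r-1, k), which gives dim W_k. *)

From HB Require Import structures.
From mathcomp Require Import all_boot all_order all_algebra.
From mathcomp Require Import fingroup perm reals complex.
From mathcomp Require Import spectral ring.
Set Implicit Arguments. Unset Strict Implicit. Unset Printing Implicit Defensive.
Import Order.TTheory GRing.Theory Num.Theory.
Local Open Scope ring_scope.

Section KSubsets.
Variables n k : nat.
Implicit Types S T : ksub n k.

Lemma ksub_enum_inj S : injective (ksub_enum S).
Proof. by move=> i j /enum_val_inj /cast_ord_inj. Qed.

Lemma mem_ksub_enum S i : ksub_enum S i \in val S.
Proof. exact: enum_valP. Qed.

Lemma imset_ksub_enum S : ksub_enum S @: setT = val S.
Proof.
apply/setP => x; apply/imsetP/idP => [[i _ ->]|xS]; first exact: mem_ksub_enum.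
exists (cast_ord (eqP (valP S)) (enum_rank_in xS x)) => //.
by rewrite /ksub_enum cast_ordK enum_rankK_in.
Qed.

Lemma ksub_subset_eq S T : val S \subset val T -> S = T.
Proof.
move=> sST; apply/val_inj/eqP; rewrite eqEcard sST /=.
by rewrite (eqP (valP S)) (eqP (valP T)).
Qed.

Lemma card_ksub : #|{: ksub n k}| = 'C(n, k).
Proof.
rewrite card_sig -[n in 'C(n, _)]card_ord -card_draws.
by apply: eq_card => A; rewrite !inE.
Qed.

Lemma prod_ksub_enum (R : comNzRingType) S (F : 'I_n -> R) :
  \prod_(j < k) F (ksub_enum S j) = \prod_(x in val S) F x.
Proof.
rewrite -imset_ksub_enum big_imset /=; last by move=> i j _ _ /ksub_enum_inj.
by apply: eq_bigl => j; rewrite inE.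
Qed.

End KSubsets.

Section CauchyBinet.
Variables (R : comNzRingType) (p k : nat).

Lemma det_mulmx_ffun (X : 'M[R]_(k, p)) (Y : 'M[R]_(p, k)) :
  \det (X *m Y) = \sum_(f : {ffun 'I_k -> 'I_p}) (\prod_i X i (f i)) * \det (rowsub f Y).
Proof.
transitivity (\sum_(s : 'S_k) \sum_(f : {ffun 'I_k -> 'I_p})
   (-1) ^+ s * ((\prod_i X i (f i)) * \prod_i Y (f i) (s i))).
  apply: eq_bigr => s _; rewrite -big_distrr /=; congr (_ * _).
  rewrite (eq_bigr (fun i => \sum_j X i j * Y j (s i))); last by move=> i _; rewrite mxE.
  rewrite bigA_distr_bigA; apply: eq_bigr => f _; exact: big_split.
rewrite exchange_big; apply: eq_bigr => f _ /=.
rewrite big_distrr /=; apply: eq_bigr => s _.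
rewrite mulrCA; congr (_ * (_ * _)).
by apply: eq_bigr => i _; rewrite mxE.
Qed.

Definition ksub_perm_ffun (x : ksub p k * 'S_k) : {ffun 'I_k -> 'I_p} :=
  [ffun i => ksub_enum x.1 (x.2 i)].

Lemma ksub_perm_ffun_inj : injective ksub_perm_ffun.
Proof.
move=> [T s] [T' s'] /ffunP /= E.
have {}E i : ksub_enum T (s i) = ksub_enum T' (s' i) by have := E i; rewrite !ffunE.
have ET : T = T'.
  apply: ksub_subset_eq; apply/subsetP => x; rewrite -imset_ksub_enum => /imsetP [i _ ->].
  by rewrite -(permKV s i) E mem_ksub_enum.
by subst T'; congr (_, _); apply/permP => i; apply: (@ksub_enum_inj _ _ T).
Qed.

Lemma imset_ksub_perm_ffun :
  ksub_perm_ffun @: setT = [set f : {ffun 'I_k -> 'I_p} | injectiveb f].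
Proof.
apply/eqP; rewrite eqEcard; apply/andP; split.
  apply/subsetP => _ /imsetP [x _ ->]; rewrite inE; apply/injectiveP => i j.
  by rewrite !ffunE => /ksub_enum_inj /perm_inj.
rewrite card_imset; last exact: ksub_perm_ffun_inj.
rewrite card_inj_ffuns cardsT card_prod card_ksub card_Sn !card_ord.
by rewrite bin_ffact.
Qed.

Lemma cauchy_binet (X : 'M[R]_(k, p)) (Y : 'M[R]_(p, k)) :
  \det (X *m Y) = \sum_(T : ksub p k)
     \det (colsub (ksub_enum T) X) * \det (rowsub (ksub_enum T) Y).
Proof.
rewrite det_mulmx_ffun (bigID (fun f : {ffun 'I_k -> 'I_p} => injectiveb f)) /=.
rewrite [X in _ + X]big1 ?addr0; last first.
  move=> f /injectivePn [i1 [i2 Di12 Ef]].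
  by rewrite (determinant_alternate Di12) ?mulr0 // => j; rewrite !mxE Ef.
rewrite (eq_bigl (fun f => f \in [set f : {ffun 'I_k -> 'I_p} | injectiveb f]));
  last by move=> f; rewrite inE.
rewrite -imset_ksub_perm_ffun big_imset /=; last by move=> x y _ _ /ksub_perm_ffun_inj.
rewrite (eq_bigl xpredT); last by move=> x; rewrite inE.
rewrite -(pair_big xpredT xpredT (fun T s => (\prod_i X i (ksub_perm_ffun (T, s) i))
   * \det (rowsub (ksub_perm_ffun (T, s)) Y))) /=.
apply: eq_bigr => T _; rewrite [X in _ = X * _]/(\det _) big_distrl /=.
apply: eq_bigr => s _.
have -> : rowsub (ksub_perm_ffun (T, s)) Y = perm_mx s *m rowsub (ksub_enum T) Y.
  by rewrite -row_permE; apply/matrixP => i j; rewrite !mxE ffunE.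
rewrite det_mulmx det_perm mulrCA mulrA; congr (_ * _ * _).
by apply: eq_bigr => i _; rewrite !mxE ffunE.
Qed.

End CauchyBinet.

Section Compound.
Variable R : comNzRingType.

Lemma compoundM m p q (A : 'M[R]_(m, p)) (B : 'M[R]_(p, q)) k :
  compound (A *m B) k = compound A k *m compound B k.
Proof.
apply/matrixP => i j; rewrite !mxE mxsub_mul cauchy_binet.
rewrite (reindex (@enum_val _ {: ksub p k})) /=; last first.
  by exists enum_rank => x _; rewrite ?enum_valK ?enum_rankK.
apply: eq_bigr => l _; rewrite !mxE.
by congr (_ * _); congr (\det _); apply/matrixP => x y; rewrite !mxE.
Qed.

Lemma compound_tr m n (A : 'M[R]_(m, n)) k : compound A^T k = (compound A k)^T.
Proof. by apply/matrixP => i j; rewrite !mxE -trmx_mxsub det_tr. Qed.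

Lemma compoundZ m n (c : R) (A : 'M[R]_(m, n)) k :
  compound (c *: A) k = c ^+ k *: compound A k.
Proof.
apply/matrixP => i j; rewrite !mxE -detZ; congr (\det _).
by apply/matrixP => x y; rewrite !mxE.
Qed.

Lemma compound_diag n (d : 'rV[R]_n) k :
  compound (diag_mx d) k = diag_mx (\row_i \prod_(j < k) d 0 (ksub_enum (enum_val i) j)).
Proof.
apply/matrixP => i j; rewrite !mxE; have [<-|ne] := eqVneq i j.
  set e := ksub_enum _; rewrite mulr1n.
  have -> : mxsub e e (diag_mx d) = diag_mx (\row_j d 0 (e j)).
    by apply/matrixP => x y; rewrite !mxE (inj_eq (@ksub_enum_inj _ _ _)).
  by rewrite det_diag; apply: eq_bigr => x _; rewrite mxE.
rewrite mulr0n; have : ~~ (val (enum_val i) \subset val (enum_val j)).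
  by apply: contra ne => /ksub_subset_eq /enum_val_inj ->.
case/subsetPn => x; rewrite -imset_ksub_enum => /imsetP [i0 _ ->] xT.
rewrite (expand_det_row _ i0) big1 // => y _; rewrite !mxE.
case: eqP => [E|_]; last by rewrite mulr0n !mul0r.
by move: xT; rewrite E mem_ksub_enum.
Qed.

Lemma compound1 n k : compound (1%:M : 'M[R]_n) k = 1%:M.
Proof.
rewrite -diag_const_mx compound_diag -diag_const_mx; congr diag_mx.
by apply/rowP => i; rewrite !mxE big1 // => j _; rewrite mxE.
Qed.

End Compound.

Lemma unitmx_compound (R : comUnitRingType) n (A : 'M[R]_n) k :
  A \in unitmx -> compound A k \in unitmx.
Proof.
move=> uA; have : compound A k *m compound (invmx A) k = 1%:M.
  by rewrite -compoundM mulmxV // compound1.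
by case/mulmx1_unit.
Qed.

Lemma compound_map (R S : comNzRingType) (f : {rmorphism R -> S}) m n
    (A : 'M[R]_(m, n)) k :
  compound (map_mx f A) k = map_mx f (compound A k).
Proof. by apply/matrixP => i j; rewrite !mxE -map_mxsub det_map_mx. Qed.

Section CompoundRank.
Variable F : fieldType.

Lemma submx_compound m1 m2 n (A : 'M[F]_(m1, n)) (B : 'M[F]_(m2, n)) k :
  (A <= B)%MS -> (compound A k <= compound B k)%MS.
Proof. by case/submxP => X ->; rewrite compoundM submxMl. Qed.

Lemma eqmx_compound m1 m2 n (A : 'M[F]_(m1, n)) (B : 'M[F]_(m2, n)) k :
  (A :=: B)%MS -> (compound A k :=: compound B k)%MS.
Proof. by move=> eAB; apply/eqmxP; rewrite !submx_compound ?eAB. Qed.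

Lemma row_free_compound m n (A : 'M[F]_(m, n)) k :
  row_free A -> row_free (compound A k).
Proof.
by case/row_freeP => B AB; apply/row_freeP; exists (compound B k);
  rewrite -compoundM AB compound1.
Qed.

Lemma mxrank_compound m n (A : 'M[F]_(m, n)) k :
  \rank (compound A k) = 'C(\rank A, k).
Proof.
rewrite -(eqmx_compound k (eq_row_base A)) -card_ksub.
exact/eqnP/row_free_compound/row_base_free.
Qed.

End CompoundRank.

Section Rationality.
Variables (C : numClosedFieldType) (D : nat).

Lemma inK0 : inK D (0 : C).
Proof. by exists 0, 0; rewrite !rmorph0 mul0r addr0. Qed.

Lemma inK1 : inK D (1 : C).
Proof. by exists 1, 0; rewrite rmorph1 rmorph0 mul0r addr0. Qed.

Lemma inKD (x y : C) : inK D x -> inK D y -> inK D (x + y).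
Proof.
by move=> [p [q ->]] [p' [q' ->]]; exists (p + p'), (q + q'); rewrite !rmorphD /=; ring.
Qed.

Lemma inKN (x : C) : inK D x -> inK D (- x).
Proof. by move=> [p [q ->]]; exists (- p), (- q); rewrite !rmorphN /=; ring. Qed.

Lemma inKM (x y : C) : inK D x -> inK D y -> inK D (x * y).
Proof.
move=> [p [q ->]] [p' [q' ->]].
exists (p * p' - D%:R * q * q'), (p * q' + q * p').
set s := sqrtC _; have sK : D%:R = - s ^+ 2 :> C by rewrite sqrtCK opprK.
by rewrite !(rmorphD, rmorphM, rmorphN) /= ratr_nat sK; ring.
Qed.

Lemma inK_sign n : inK D ((-1) ^+ n : C).
Proof.
by elim: n => [|n IHn]; rewrite ?expr0 ?exprS; [exact: inK1 | exact/inKM/IHn/inKN/inK1].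
Qed.

Lemma inK_sum (I : finType) (P : pred I) (F : I -> C) :
  (forall i, P i -> inK D (F i)) -> inK D (\sum_(i | P i) F i).
Proof. by move=> FK; apply: big_ind => //; [exact: inK0 | exact: inKD]. Qed.

Lemma inK_prod (I : finType) (P : pred I) (F : I -> C) :
  (forall i, P i -> inK D (F i)) -> inK D (\prod_(i | P i) F i).
Proof. by move=> FK; apply: big_ind => //; [exact: inK1 | exact: inKM]. Qed.

Lemma inK_det n (A : 'M[C]_n) : mxK D A -> inK D (\det A).
Proof.
by move=> AK; apply: inK_sum => s _; apply: inKM; [exact: inK_sign | exact: inK_prod].
Qed.

Lemma mxK_mul m n p (A : 'M[C]_(m, n)) (B : 'M[C]_(n, p)) :
  mxK D A -> mxK D B -> mxK D (A *m B).
Proof. by move=> AK BK i j; rewrite mxE; apply: inK_sum => l _; apply: inKM. Qed.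

Lemma mxK_scale m n (c : C) (A : 'M[C]_(m, n)) : inK D c -> mxK D A -> mxK D (c *: A).
Proof. by move=> cK AK i j; rewrite mxE; apply: inKM. Qed.

Lemma mxK_compound m n (A : 'M[C]_(m, n)) k : mxK D A -> mxK D (compound A k).
Proof. by move=> AK i j; rewrite mxE; apply: inK_det => x y; rewrite mxE. Qed.

Lemma mxK_perm n (s : 'S_n) : mxK D (perm_mx s : 'M[C]_n).
Proof. by move=> i j; rewrite !mxE; case: eqP => _; [exact: inK1 | exact: inK0]. Qed.

End Rationality.

Section Adjoint.
Variable C : numClosedFieldType.

Lemma adjmxM m n p (A : 'M[C]_(m, n)) (B : 'M[C]_(n, p)) :
  adjmx (A *m B) = adjmx B *m adjmx A.
Proof. by rewrite /adjmx trmx_mul map_mxM. Qed.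

Lemma adjmxK m n (A : 'M[C]_(m, n)) : adjmx (adjmx A) = A.
Proof. by apply/matrixP => i j; rewrite !mxE conjCK. Qed.

Lemma adjmxN m n (A : 'M[C]_(m, n)) : adjmx (- A) = - adjmx A.
Proof. by apply/matrixP => i j; rewrite !mxE rmorphN. Qed.

Lemma adjmxZ m n c (A : 'M[C]_(m, n)) : adjmx (c *: A) = c^* *: adjmx A.
Proof. by apply/matrixP => i j; rewrite !mxE rmorphM. Qed.

Lemma adjmx_congr m n (P : 'M[C]_(m, n)) (G : 'M[C]_n) :
  adjmx G = G -> adjmx (P *m G *m adjmx P) = P *m G *m adjmx P.
Proof. by move=> hG; rewrite !adjmxM adjmxK hG mulmxA. Qed.

Lemma adjmx_perm n (s : 'S_n) : adjmx (perm_mx s : 'M[C]_n) = perm_mx s^-1.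
Proof.
rewrite /adjmx tr_perm_mx; apply/matrixP => i j; rewrite !mxE.
by case: eqP; rewrite ?rmorph1 ?rmorph0.
Qed.

Lemma compound_adj m n (A : 'M[C]_(m, n)) k : compound (adjmx A) k = adjmx (compound A k).
Proof. by rewrite /adjmx (compound_map Num.conj) compound_tr. Qed.

Lemma congr_compound m n (P : 'M[C]_(m, n)) (G : 'M[C]_n) k :
  compound (P *m G *m adjmx P) k = compound P k *m compound G k *m adjmx (compound P k).
Proof. by rewrite !compoundM compound_adj. Qed.

End Adjoint.

Lemma perm_set_first n (X : {set 'I_n}) :
  exists s : 'S_n, forall i, (s i < #|X|)%N = (i \in X).
Proof.
pose e := enum X ++ enum (~: X).
have e_all i : i \in e by rewrite mem_cat !mem_enum in_setC orbN.
have pos_lt i : (index i e < n)%N.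
  have size_e : size e = n by rewrite size_cat -!cardE cardsC card_ord.
  by rewrite -[X in (_ < X)%N]size_e index_mem.
have pos_inj : injective (fun i => Ordinal (pos_lt i)).
  by move=> i j [] /index_inj; apply.
exists (perm pos_inj) => i; rewrite permE /= index_cat mem_enum.
by case: ifP => iX; rewrite ?cardE ?index_mem ?mem_enum // ltnNge leq_addr.
Qed.

Section Signature.
Variables (C : numClosedFieldType) (D : nat).

Lemma has_sig_congr n (P G : 'M[C]_n) a :
  mxK D P -> P \in unitmx -> has_sig D (P *m G *m adjmx P) a -> has_sig D G a.
Proof.
move=> PK uP [Q [QK uQ eQ]]; exists (Q *m P); split.
- exact: mxK_mul.
- by rewrite unitmx_mul uQ.
- by rewrite adjmxM !mulmxA -eQ !mulmxA.
Qed.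

Lemma has_sig_diag_sign n (X : {set 'I_n}) :
  has_sig D (diag_mx (\row_i (if i \in X then 1 else -1 : C))) #|X|.
Proof.
have [s sP] := perm_set_first X.
exists (perm_mx s^-1); split; [exact: mxK_perm | exact: unitmx_perm |].
rewrite adjmx_perm -col_permE -row_permE.
apply/matrixP => x y; rewrite !mxE (inj_eq perm_inj).
by case: eqP => _; rewrite ?mulr0n ?mulr1n // -{2}(permKV s x) sP.
Qed.

End Signature.

Lemma prod_sigmx1_ksub (R : comNzRingType) r k (S : ksub r.+1 k.+1) :
  (-1) ^+ k * \prod_(j < k.+1) (if (ksub_enum S j < 1)%N then 1 else -1 : R) =
  if ord0 \in val S then 1 else -1.
Proof.
rewrite (prod_ksub_enum S (fun x => if (x < 1)%N then 1 else -1 : R)).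
rewrite (big_setID [set ord0]) /= big1 ?mul1r; last first.
  by move=> x /setIP[_ /set1P ->].
rewrite (eq_bigr (fun=> -1)) ?prodr_const; last first.
  by move=> x /setD1P[x0 _]; rewrite ltnS leqn0 -[0%N]/(val (@ord0 r)) val_eqE (negPf x0).
have := cardsD1 ord0 (val S); rewrite (eqP (valP S)).
case: (ord0 \in val S); rewrite ?add1n ?add0n => /eqP; rewrite ?eqSS => /eqP <-.
all: by rewrite -exprD -signr_odd ?addnS /= oddD addbb.
Qed.

Lemma compound_sigmx1 (R : comNzRingType) r k :
  (-1) ^+ k *: compound (sigmx R r.+1 1) k.+1 =
  diag_mx (\row_(i < #|{: ksub r.+1 k.+1}|) if ord0 \in val (enum_val i) then 1 else -1).
Proof.
rewrite /sigmx compound_diag; apply/matrixP => i j; rewrite !mxE mulrnAr.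
by congr (_ *+ _); under eq_bigr do rewrite mxE; exact: prod_sigmx1_ksub.
Qed.

Lemma card_ksub_mem0 r k : #|[set S : ksub r.+1 k.+1 | ord0 \in val S]| = 'C(r, k).
Proof.
have card_notin : #|[set S : ksub r.+1 k.+1 | ord0 \notin val S]| = 'C(r, k.+1).
  rewrite -(card_imset _ val_inj).
  have -> : 'C(r, k.+1) = 'C(#|[set~ (@ord0 r)]|, k.+1) by rewrite cardsC1 card_ord.
  rewrite -cards_draws; apply: eq_card => A; rewrite inE.
  apply/imsetP/idP => [[S + ->]|/andP[sA cA]].
    rewrite inE (valP S) andbT => S0; apply/subsetP => x xS; rewrite !inE.
    by apply: contraNneq S0 => <-.
  exists (exist _ A cA) => //; rewrite inE /=.
  by apply/negP => /(subsetP sA); rewrite !inE eqxx.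
apply/eqP; rewrite -(eqn_add2l 'C(r, k.+1)) -binS -card_notin.
rewrite -card_ksub -(cardsC [set S : ksub r.+1 k.+1 | ord0 \in val S]
  : _ = #|{: ksub r.+1 k.+1}|) addnC; apply/eqP.
congr (_ + _)%N.
by apply: eq_card => S; rewrite !inE.
Qed.

Lemma has_sig_compound (C : numClosedFieldType) D r k (G : 'M[C]_r.+1) :
  has_sig D G 1 -> has_sig D ((-1) ^+ k *: compound G k.+1) 'C(r, k).
Proof.
case=> P [PK uP eP].
apply: (has_sig_congr (mxK_compound (k := k.+1) PK) (unitmx_compound k.+1 uP)).
rewrite -scalemxAr -scalemxAl -congr_compound eP compound_sigmx1.
pose X := [set i : 'I_#|{: ksub r.+1 k.+1}| | ord0 \in val (enum_val i)].
have -> : 'C(r, k) = #|X|.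
  rewrite -card_ksub_mem0 -(card_imset _ enum_val_inj).
  apply: eq_card => S; rewrite inE; apply/idP/imsetP => [S0|[i + ->]].
    by exists (enum_rank S); rewrite ?inE enum_rankK.
  by rewrite inE.
suff -> : \row_(i < #|{: ksub r.+1 k.+1}|) (if ord0 \in val (enum_val i) then 1 else -1)
          = \row_i (if i \in X then 1 else -1 : C).
  exact: has_sig_diag_sign.
by apply/rowP => i; rewrite !mxE inE.
Qed.

Section DefiniteForms.
Variable C : numClosedFieldType.

Lemma row_form_mxE m n (A : 'M[C]_(m, n)) (M : 'M[C]_n) i :
  (row i A *m M *m adjmx (row i A)) 0 0 = (A *m M *m adjmx A) i i.
Proof.
rewrite !mxE; apply: eq_bigr => j _; rewrite !mxE; congr (_ * _).
by apply: eq_bigr => l _; rewrite !mxE.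
Qed.

Lemma diag_form_gt0 n (d : 'rV[C]_n) (x : 'rV[C]_n) :
  (forall i, 0 < d 0 i) -> x != 0 -> 0 < (x *m diag_mx d *m adjmx x) 0 0.
Proof.
move=> d_gt0 x0; have /existsP [j xj] : [exists j, x 0 j != 0].
  apply: contraNT x0 => /existsPn x_eq0; apply/eqP/rowP => j.
  by rewrite mxE; apply/eqP; have := x_eq0 j; rewrite negbK.
have term i : x 0 i * d 0 i * (x 0 i)^* = d 0 i * `|x 0 i| ^+ 2.
  by rewrite normCK mulrAC mulrC.
rewrite mul_mx_diag mxE (bigD1 j) //= !mxE term ltr_pwDl //.
  by rewrite mulr_gt0 ?exprn_gt0 ?normr_gt0.
rewrite sumr_ge0 // => i _; rewrite !mxE term.
by apply: mulr_ge0; [exact: ltW | exact: exprn_ge0].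
Qed.

Lemma negdef_on_diag m n (G : 'M[C]_n) (B : 'M[C]_(m, n)) (d : 'rV[C]_m) :
  B *m (- G) *m adjmx B = diag_mx d -> (forall i, 0 < d 0 i) -> negdef_on G B.
Proof.
move=> eB d_gt0 _ /submxP [x ->] xB0.
have x0 : x != 0 by apply: contraNneq xB0 => ->; rewrite mul0mx.
have -> : - (x *m B *m G *m adjmx (x *m B)) 0 0 = (x *m diag_mx d *m adjmx x) 0 0.
  by rewrite -eB adjmxM !mulmxA mulmxN !mulNmx [RHS]mxE.
exact: diag_form_gt0.
Qed.

Lemma negdef_diag_basis m n (G : 'M[C]_n) (B : 'M[C]_(m, n)) :
  adjmx G = G -> negdef_on G B ->
  exists B' : 'M[C]_(\rank B, n), exists d : 'rV[C]_(\rank B),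
    [/\ (B' :=: B)%MS, B' *m (- G) *m adjmx B' = diag_mx d & forall i, 0 < d 0 i].
Proof.
move=> hG ndB; set B0 := row_base B; set S := B0 *m (- G) *m adjmx B0.
have nS : S \is normalmx.
  have hS : adjmx S = S by rewrite adjmx_congr // adjmxN hG.
  by apply/normalmxP; change (S *m adjmx S = adjmx S *m S); rewrite hS.
set V := spectralmx S; set d := spectral_diag S.
have VV : V *m adjmx V = 1%:M by apply/unitarymxP/spectral_unitarymx.
have eS : S = adjmx V *m diag_mx d *m V.
  have -> : adjmx V = invmx V by rewrite invmx_unitary ?spectral_unitarymx.
  exact/orthomx_spectralP.
have eB : (V *m B0 :=: B)%MS.
  by apply: eqmx_trans (eq_row_base B); apply: eqmxMfull; rewrite row_full_unit spectral_unit.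
have eD : V *m B0 *m - G *m adjmx (V *m B0) = diag_mx d.
  have -> : V *m B0 *m - G *m adjmx (V *m B0) = V *m S *m adjmx V.
    by rewrite adjmxM /S !mulmxA.
  by rewrite eS !mulmxA VV mul1mx -mulmxA VV mulmx1.
exists (V *m B0), d; split => // i.
have free_VB : row_free (V *m B0) by rewrite /row_free eB.
have <- : (V *m B0 *m - G *m adjmx (V *m B0)) i i = d 0 i by rewrite eD mxE eqxx.
rewrite -row_form_mxE mulmxN mulNmx mxE.
apply: ndB; first by rewrite -eB row_sub.
rewrite rowE mulmx_free_eq0 //; apply/eqP => /matrixP/(_ 0 i)/eqP.
by rewrite !mxE !eqxx oner_eq0.
Qed.

Lemma negdef_on_compound m n (G : 'M[C]_n) (B : 'M[C]_(m, n)) k :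
  adjmx G = G -> negdef_on G B -> negdef_on (- compound (- G) k) (compound B k).
Proof.
move=> hG /(negdef_diag_basis hG) [B' [d [eB eD d_gt0]]] w.
rewrite -(eqmx_compound k eB); move: w; apply: negdef_on_diag.
  by rewrite opprK -congr_compound eD compound_diag.
by move=> i; rewrite mxE prodr_gt0.
Qed.

End DefiniteForms.

Lemma mxrank_ker_col (F : fieldType) n (a : 'cV[F]_n) : a != 0 -> \rank (kermx a) = n.-1.
Proof.
move=> a0; rewrite mxrank_ker -subn1; congr (_ - _)%N.
by apply/eqP; rewrite eqn_leq rank_leq_col lt0n mxrank_eq0 a0.
Qed.

Unset Implicit Arguments.

Theorem mainTheorem2 (R : realType) (Delta : nat) (r k : nat)
  (G : 'M[R[i]]_r) (a : 'cV[R[i]]_r) :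
  (0 < Delta)%N -> (1 <= r)%N ->
  mxK Delta G -> adjmx G = G ->
  has_sig Delta G 1 ->
  a != 0 ->
  negdef_on G (kermx a) ->
  (1 <= k <= r)%N ->
  let n := #|{: ksub r k}| in
  let H' := (-1) ^+ k.-1 *: compound G k in
  let Lk_ker := compound (kermx a) k in
  [/\ (n - \rank Lk_ker)%N = 'C(r.-1, k.-1),
      n = 'C(r, k) /\ n = ('C(r.-1, k.-1) + 'C(r.-1, k))%N,
      mxK Delta H' /\ adjmx H' = H',
      has_sig Delta H' 'C(r.-1, k.-1)
    & negdef_on H' Lk_ker].
Proof.
move=> _ _ GK hG sigG a0 ndG /andP[k_gt0 k_le_r].
case: r => [|r] in G a GK hG sigG a0 ndG k_le_r *; first by case: k k_gt0 k_le_r.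
case: k => // k in k_gt0 k_le_r *.
move=> n H' Lk /=.
have card_n : n = 'C(r.+1, k.+1) by exact: card_ksub.
have rank_Lk : \rank Lk = 'C(r, k.+1) by rewrite mxrank_compound mxrank_ker_col.
have H'E : H' = - compound (- G) k.+1.
  by rewrite /H' -[- G]scaleN1r compoundZ -scaleNr exprS mulN1r opprK.
split.
- by rewrite rank_Lk card_n binS addKn.
- by rewrite card_n binS addnC.
- split; first exact/mxK_scale/mxK_compound/GK/inK_sign.
  by rewrite /H' adjmxZ -compound_adj hG rmorphXn rmorphN1.
- exact: has_sig_compound.
- by rewrite H'E; exact: negdef_on_compound.
Qed.
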